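(* Let $V$ be a finite set, $s,t\in V$, $d$ an $st$-separating semi-metric on $V$, and $A\subseteq V$ nonempty. Define $f_A^{\pm}:V\to\mathbb R^2$ by $f_A^{\pm}(v)=(f_A^{+}(v),f_A^{-}(v))$ where $f_A^{\sigma}(v)=\tfrac12\left[d(v,s)+\sigma\, d(v,A)\right]$ for $\sigma\in\{+1,-1\}$ and $d(v,A)=\min_{a\in A}d(v,a)$. Then for all $u,v\in V$, \[\|f_A^{\pm}(u)-f_A^{\pm}(v)\|_1\le 2\,d(u,v).\]
   Context: A semi-metric on $V$ is a symmetric map $d:V\times V\to\mathbb R_{\ge0}$ with $d(v,v)=0$ satisfying the triangle inequality; it is $st$-separating if $d(s,t)=d(s,v)+d(v,t)$ for all $v\in V$. *)

From mathcomp Require Import all_boot all_order all_algebra.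
Set Implicit Arguments. Unset Strict Implicit. Unset Printing Implicit Defensive.
Import Order.TTheory GRing.Theory Num.Theory.
Local Open Scope ring_scope.

Definition semi_metric (R : realFieldType) (V : finType) (d : V -> V -> R) : Prop :=
  [/\ forall u v, 0 <= d u v,
      forall v, d v v = 0,
      forall u v, d u v = d v u &
      forall u v w, d u w <= d u v + d v w].

Definition st_separating (R : realFieldType) (V : finType) (d : V -> V -> R)
  (s t : V) : Prop := forall v, d s t = d s v + d v t.

(* d(v,A) = min_{a in A} d(v,a)  (A nonempty; junk value 0 if A is empty). *)
Definition dist_set (R : realFieldType) (V : finType) (d : V -> V -> R)
  (A : {set V}) (v : V) : R :=
  match [pick a in A] with
  | Some a0 => \big[Num.min/d v a0]_(a in A) d v a
  | None => 0
  end.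

Definition fA_plus (R : realFieldType) (V : finType) (d : V -> V -> R)
  (s : V) (A : {set V}) (v : V) : R := (d v s + dist_set d A v) / 2.
Definition fA_minus (R : realFieldType) (V : finType) (d : V -> V -> R)
  (s : V) (A : {set V}) (v : V) : R := (d v s - dist_set d A v) / 2.

Definition fA_pm_l1 (R : realFieldType) (V : finType) (d : V -> V -> R)
  (s : V) (A : {set V}) (u v : V) : R :=
  `|fA_plus d s A u - fA_plus d s A v| + `|fA_minus d s A u - fA_minus d s A v|.

From mathcomp Require Import all_boot all_order all_algebra.
From mathcomp Require Import lra.
Import Order.TTheory GRing.Theory Num.Theory.
Local Open Scope ring_scope.

(* Both v |-> d(v,s) and v |-> d(v,A) are 1-Lipschitz, and for reals
   |(a+b)/2| + |(a-b)/2| = max(|a|,|b|); hence the l1 distance is in fact at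
   most d(u,v). *)

Lemma normD_half_add_normB_half (R : realFieldType) (a b : R) :
  `|(a + b) / 2| + `|(a - b) / 2| = Num.max `|a| `|b|.
Proof.
have normE (x : R) : `|x| = if 0 <= x then x else - x.
  by case: (lerP 0 x) => [/ger0_norm|/ltr0_norm].
rewrite /Num.max; case: ltP; rewrite !normE;
  case: (lerP 0 a); case: (lerP 0 b); case: (lerP 0 ((a + b) / 2));
  case: (lerP 0 ((a - b) / 2)); lra.
Qed.

Section SemiMetric.

Variables (R : realFieldType) (V : finType) (d : V -> V -> R).
Hypothesis hd : semi_metric d.

Lemma semi_metric_lipschitz (u v w : V) : `|d u w - d v w| <= d u v.
Proof.
case: hd => _ _ sym tri; rewrite ler_norml.
have := tri u v w; have := tri v u w; rewrite (sym v u); lra.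
Qed.

Variable A : {set V}.

Lemma dist_set_le (v a : V) : a \in A -> dist_set d A v <= d v a.
Proof.
move=> aA; rewrite /dist_set; case: pickP => [a0 _|/(_ a)]; last by rewrite aA.
by rewrite (bigD1 a) //= ge_min lexx.
Qed.

Lemma dist_set_attained (v : V) :
  A != set0 -> exists2 a, a \in A & dist_set d A v = d v a.
Proof.
case/set0Pn=> x xA; rewrite /dist_set; case: pickP => [a0 a0A|/(_ x)]; last by rewrite xA.
elim/big_rec: _ => [|i m iA [b bA ->]]; first by exists a0.
by case: (leP (d v i) (d v b)) => _; [exists i|exists b].
Qed.

Lemma dist_set_lipschitz (u v : V) :
  A != set0 -> `|dist_set d A u - dist_set d A v| <= d u v.
Proof.
move=> nA; have [_ _ sym tri] := hd.
have one_sided w1 w2 : dist_set d A w1 - dist_set d A w2 <= d w1 w2.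
  have [a aA ->] := dist_set_attained w2 nA.
  have := @dist_set_le w1 a aA; have := tri w1 w2 a; lra.
rewrite ler_norml; have := one_sided u v; have := one_sided v u.
rewrite (sym v u); lra.
Qed.

Lemma fA_pm_l1_le (s u v : V) : A != set0 -> fA_pm_l1 d s A u v <= d u v.
Proof.
move=> nA; rewrite /fA_pm_l1 /fA_plus /fA_minus.
have -> : forall x y p q : R, (x + p) / 2 - (y + q) / 2 = ((x - y) + (p - q)) / 2
  by move=> *; lra.
have -> : forall x y p q : R, (x - p) / 2 - (y - q) / 2 = ((x - y) - (p - q)) / 2
  by move=> *; lra.
rewrite normD_half_add_normB_half ge_max.
by rewrite semi_metric_lipschitz dist_set_lipschitz.
Qed.

End SemiMetric.

Theorem proposition2p8 (R : realFieldType) (V : finType) (s t : V)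
  (d : V -> V -> R) (A : {set V}) :
  semi_metric d -> st_separating d s t -> A != set0 ->
  forall u v : V, fA_pm_l1 d s A u v <= 2 * d u v.
Proof.
move=> hd _ nA u v; have := @fA_pm_l1_le _ _ _ hd A s u v nA.
have [d_ge0 _ _ _] := hd; have := d_ge0 u v; lra.
Qed.
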